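(* Let $\tau:\mathbb{F}_p((t))^d\to\mathbb{F}_p((t))^d$, $(f_1,\dots,f_d)\mapsto(tf_1,\dots,tf_d)$, and let $\phi:\mathbb{F}_p((t))\to\mathrm{Aut}(\mathbb{F}_p((t))^d)$ be a continuous homomorphism satisfying $\phi(tf)=\tau\circ\phi(f)\circ\tau^{-1}$ for all $f$. Suppose that for every $f\in\mathbb{F}_p((t))$ the block matrix of $\phi(f)$ is lower triangular, i.e. $\phi(f)_{i,j}=0$ whenever $j>i$. Let $\mathcal{A}$ be the subalgebra of $\mathrm{End}(\mathbb{F}_p((t))^d)$ generated by $\{\phi(t^r)-\mathrm{Id}: r\in\mathbb{Z}\}$ and $\mathcal{A}^d=\{a_1\cdots a_d : a_1,\dots,a_d\in\mathcal{A}\}$. Then $B_{i,i}=0$ for every $B\in\mathcal{A}^d$ and every $i\in\mathbb{Z}$.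
   Context: $\mathrm{Aut}(\mathbb{F}_p((t))^d)$ has the Braconnier topology (basis of identity neighbourhoods $\{\alpha:\alpha(x)-x\in U,\ \alpha^{-1}(x)-x\in U\ \forall x\in K\}$, $K$ compact, $U$ an identity neighbourhood). $\mathrm{End}(\mathbb{F}_p((t))^d)$ is the ring of continuous additive endomorphisms. For $n\in\mathbb{Z}$ let $\mathbb{V}_n=\{(a_1t^n,\dots,a_dt^n):a_r\in\mathbb{F}_p\}\cong\mathbb{F}_p^d$, $\pi_n$ the projection onto $\mathbb{V}_n$ taking $t^n$-coefficients, and for $A\in\mathrm{End}$, $A_{i,j}=\pi_i\circ A|_{\mathbb{V}_j}$ as a $d\times d$ matrix over $\mathbb{F}_p$. *)

From HB Require Import structures.
From mathcomp Require Import all_boot all_order all_algebra zify.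
Set Implicit Arguments. Unset Strict Implicit. Unset Printing Implicit Defensive.
Import Order.TTheory GRing.Theory Num.Theory.
Local Open Scope ring_scope.

(* F_p((t)) = laurent 'F_p and F_p((t))^d = laurent 'rV['F_p]_d
   (the coefficient of t^n of (f_1,..,f_d) is the row vector of the t^n
   coefficients of the f_r). *)
Definition lbd (M : zmodType) (x : int -> M) :=
  exists N : int, forall n : int, n < N -> x n = 0.

Definition laurent (M : zmodType) := {x : int -> M | lbd x}.

Definition coef (M : zmodType) (x : laurent M) : int -> M := proj1_sig x.

Lemma lbd_add (M : zmodType) (x y : int -> M) :
  lbd x -> lbd y -> lbd (fun n => x n + y n).
Proof.
move=> [N hN] [K hK]; exists (Order.min N K) => n.
by rewrite lt_min => /andP[h1 h2]; rewrite hN // hK // addr0.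
Qed.

Lemma lbd_opp (M : zmodType) (x : int -> M) : lbd x -> lbd (fun n => - x n).
Proof. by move=> [N hN]; exists N => n hn; rewrite hN // oppr0. Qed.

Lemma lbd_zero (M : zmodType) : lbd (fun _ : int => (0 : M)).
Proof. by exists 0. Qed.

Lemma lbd_shift (M : zmodType) (x : int -> M) : lbd x -> lbd (fun n => x (n - 1)).
Proof. by move=> [N hN]; exists (N + 1) => n hn; apply: hN; lia. Qed.

Lemma lbd_unshift (M : zmodType) (x : int -> M) : lbd x -> lbd (fun n => x (n + 1)).
Proof. by move=> [N hN]; exists (N - 1) => n hn; apply: hN; lia. Qed.

Lemma lbd_mono (M : zmodType) (r : int) (v : M) :
  lbd (fun n => if n == r then v else 0).
Proof. by exists r => n hn; rewrite lt_eqF. Qed.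

Lemma lbd_scale (R : pzRingType) (M : lmodType R) (c : R) (x : int -> M) :
  lbd x -> lbd (fun n => c *: x n).
Proof. by move=> [N hN]; exists N => n hn; rewrite hN // scaler0. Qed.

Definition ladd (M : zmodType) (x y : laurent M) : laurent M :=
  exist _ _ (lbd_add (proj2_sig x) (proj2_sig y)).
Definition lopp (M : zmodType) (x : laurent M) : laurent M :=
  exist _ _ (lbd_opp (proj2_sig x)).
Definition lsub (M : zmodType) (x y : laurent M) : laurent M := ladd x (lopp y).
Definition lzero (M : zmodType) : laurent M := exist _ _ (@lbd_zero M).
Definition lscale (R : pzRingType) (M : lmodType R) (c : R) (x : laurent M)
  : laurent M := exist _ _ (lbd_scale c (proj2_sig x)).

Arguments lzero {M}.

Definition tmul (M : zmodType) (x : laurent M) : laurent M :=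
  exist _ _ (lbd_shift (proj2_sig x)).
Definition tinv (M : zmodType) (x : laurent M) : laurent M :=
  exist _ _ (lbd_unshift (proj2_sig x)).

Arguments tmul {M} x.
Arguments tinv {M} x.

Definition mono (M : zmodType) (r : int) (v : M) : laurent M :=
  exist _ _ (lbd_mono r v).

Definition tpow (p : nat) (r : int) : laurent 'F_p := mono r 1.

Definition ball (M : zmodType) (N : int) (x : laurent M) :=
  forall n : int, n < N -> coef x n = 0.

Definition is_open (M : zmodType) (O : laurent M -> Prop) :=
  forall x, O x -> exists N, forall y, ball N (lsub y x) -> O y.

Definition is_compact (M : zmodType) (K : laurent M -> Prop) :=
  forall (I : Type) (O : I -> laurent M -> Prop),
    (forall i, is_open (O i)) -> (forall x, K x -> exists i, O i x) ->
    exists s : seq I, forall x, K x -> exists2 i, List.In i s & O i x.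

Definition nbhd0 (M : zmodType) (U : laurent M -> Prop) :=
  exists O, is_open O /\ O lzero /\ (forall x, O x -> U x).

Definition cont (M : zmodType) (h : laurent M -> laurent M) :=
  forall x N, exists K, forall y, ball K (lsub y x) -> ball N (lsub (h y) (h x)).

(* continuity of the inverse of a bijection h *)
Definition cont_inv (M : zmodType) (h : laurent M -> laurent M) :=
  forall x N, exists K, forall y, ball K (lsub (h y) (h x)) -> ball N (lsub y x).

Definition additive_map (M : zmodType) (h : laurent M -> laurent M) :=
  forall x y, h (ladd x y) = ladd (h x) (h y).

Definition is_aut (M : zmodType) (h : laurent M -> laurent M) :=
  [/\ additive_map h, bijective h, cont h & cont_inv h].

(* Braconnier topology: gamma lies in the basic neighbourhood alpha * W(K,U) of
   alpha, where W(K,U) = {b : b x - x \in U, b^-1 x - x \in U, forall x \in K}.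
   alpha^-1 gamma x - x \in U  is written  forall z, alpha z = gamma x -> z - x \in U;
   (alpha^-1 gamma)^-1 x - x = gamma^-1 alpha x - x similarly. *)
Definition brac_near (M : zmodType) (alpha gamma : laurent M -> laurent M)
  (K U : laurent M -> Prop) :=
  (forall x z, K x -> alpha z = gamma x -> U (lsub z x)) /\
  (forall x y, K x -> gamma y = alpha x -> U (lsub y x)).

Definition brac_continuous (p d : nat)
  (phi : laurent 'F_p -> laurent 'rV['F_p]_d -> laurent 'rV['F_p]_d) :=
  forall f (K U : laurent 'rV['F_p]_d -> Prop),
    is_compact K -> nbhd0 U ->
    exists N : int, forall g, ball N (lsub g f) -> brac_near (phi f) (phi g) K U.

(* A_{i,j} = pi_i o A |_{V_j} as a d x d matrix over F_p (column s = image of the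
   s-th standard basis vector of V_j) *)
Definition blk (p d : nat) (A : laurent 'rV['F_p]_d -> laurent 'rV['F_p]_d)
  (i j : int) : 'M['F_p]_d :=
  \matrix_(r < d, s < d) (coef (A (mono j (delta_mx 0 s))) i) 0 r.

Inductive in_alg (p d : nat)
  (gens : (laurent 'rV['F_p]_d -> laurent 'rV['F_p]_d) -> Prop) :
  (laurent 'rV['F_p]_d -> laurent 'rV['F_p]_d) -> Prop :=
| alg_gen a : gens a -> in_alg gens a
| alg_zero : in_alg gens (fun _ => lzero)
| alg_add a b : in_alg gens a -> in_alg gens b -> in_alg gens (fun x => ladd (a x) (b x))
| alg_scale (c : 'F_p) a : in_alg gens a -> in_alg gens (fun x => lscale c (a x))
| alg_comp a b : in_alg gens a -> in_alg gens b -> in_alg gens (a \o b).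

Definition prod_maps (T : Type) (s : seq (T -> T)) : T -> T :=
  foldr (fun a acc => a \o acc) id s.

(* For every block index i, the map a |-> a_{i,i} sends the algebra A
   into the matrix algebra generated by the d x d matrices
   D_r - 1, D_r := phi(t^r)_{i,i}.  These matrices commute (phi is a
   homomorphism from the abelian group F_p((t))) and are nilpotent
   (p t^r = 0, so D_r^p = 1 and (D_r - 1)^p = D_r^p - 1 = 0 in characteristic p).
   The algebra generated by commuting nilpotent d x d matrices is nilpotent of
   index at most d, whence the result. *)

From HB Require Import structures.
From mathcomp Require Import all_boot all_order all_algebra zify.
From Stdlib Require Import Classical FunctionalExtensionality ProofIrrelevance.
Import Order.TTheory GRing.Theory Num.Theory.
Local Open Scope ring_scope.

Section NilpotentMatrixAlgebra.
Set Implicit Arguments. Unset Strict Implicit.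

Variables (F : fieldType) (n : nat).
Implicit Types (S : 'M[F]_n -> Prop) (A N Z W : 'M[F]_n).

Inductive mx_alg S : 'M[F]_n -> Prop :=
| mx_alg_gen A : S A -> mx_alg S A
| mx_alg_zero : mx_alg S 0
| mx_alg_add A B : mx_alg S A -> mx_alg S B -> mx_alg S (A + B)
| mx_alg_scale c A : mx_alg S A -> mx_alg S (c *: A)
| mx_alg_mul A B : mx_alg S A -> mx_alg S B -> mx_alg S (A *m B).

Definition mx_stable S Z := forall N, S N -> (Z *m N <= Z)%MS.

Lemma mx_alg_into S Z : mx_stable S Z ->
  forall A, mx_alg S A ->
  forall k (Y : 'M_(k, n)), (forall N, S N -> (Y *m N <= Z)%MS) -> (Y *m A <= Z)%MS.
Proof.
move=> stZ A; elim=> {A} [A SA| |A B _ IHA _ IHB|c A _ IHA|A B _ IHA _ IHB] k Y hY.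
- exact: hY.
- by rewrite mulmx0 sub0mx.
- by rewrite mulmxDr addmx_sub ?IHA ?IHB.
- by rewrite -scalemxAr scalemx_sub ?IHA.
- rewrite mulmxA; apply: IHB => N SN.
  exact: submx_trans (submxMr N (IHA _ _ hY)) (stZ N SN).
Qed.

Lemma mx_alg_stable S Z : mx_stable S Z -> forall A, mx_alg S A -> (Z *m A <= Z)%MS.
Proof. by move=> stZ A hA; exact: (mx_alg_into stZ hA). Qed.

Lemma last_escape W Z N k : N ^+ k = 0 -> ~~ (W <= Z)%MS ->
  exists j, ~~ (W *m N ^+ j <= Z)%MS && (W *m N ^+ j.+1 <= Z)%MS.
Proof.
move=> Nk0 WZ.
have : (W *m N ^+ k <= Z)%MS by rewrite Nk0 mulmx0 sub0mx.
elim: k {Nk0} => [|k IHk]; first by rewrite expr0 mulmx1 (negbTE WZ).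
by case: (boolP (W *m N ^+ k <= Z)%MS) => [/IHk|hk hk1]; last exists k; rewrite ?hk.
Qed.

Lemma stable_expmx S W N : mx_stable S W -> S N -> forall i, (W *m N ^+ i <= W)%MS.
Proof.
move=> stW SN; elim=> [|i IHi]; first by rewrite expr0 mulmx1.
by rewrite exprSr -mulmxE mulmxA (submx_trans (submxMr N IHi) (stW N SN)).
Qed.

Definition mx_preimage W N Z := (W :&: kermx (N *m cokermx Z))%MS.

Lemma sub_mx_preimage W N Z k (X : 'M_(k, n)) :
  (X <= mx_preimage W N Z)%MS = (X <= W)%MS && (X *m N <= Z)%MS.
Proof. by rewrite sub_capmx sub_kermx mulmxA -submxE. Qed.

Section CommutingNilpotent.
Variable S : 'M[F]_n -> Prop.
Hypothesis S_comm : forall A B, S A -> S B -> A *m B = B *m A.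
Hypothesis S_nil : forall A, S A -> exists k, A ^+ k = 0.

(* Since S is commutative, preimages of S-stable spaces are S-stable. *)
Lemma stable_preimage Z W N : mx_stable S Z -> mx_stable S W -> S N ->
  mx_stable S (mx_preimage W N Z).
Proof.
move=> stZ stW SN M SM.
have /andP[PW PN] : (mx_preimage W N Z <= W)%MS && (mx_preimage W N Z *m N <= Z)%MS.
  by rewrite -sub_mx_preimage.
rewrite sub_mx_preimage (submx_trans (submxMr M PW) (stW M SM)) /=.
rewrite -mulmxA (S_comm SM SN) mulmxA.
exact: submx_trans (submxMr M PN) (stZ M SM).
Qed.

(* Since N is nilpotent, the preimage by N of Z in W is not contained in Z. *)
Lemma preimage_escape Z W N : mx_stable S W -> S N -> ~~ (W <= Z)%MS ->
  ~~ (mx_preimage W N Z <= Z)%MS.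
Proof.
move=> stW SN WZ; have [k Nk0] := S_nil SN.
have [j /andP[escj inj1]] := last_escape Nk0 WZ.
apply: contra escj => /(submx_trans _); apply.
by rewrite sub_mx_preimage (stable_expmx stW SN) /= -mulmxA mulmxE -exprSr.
Qed.

(* By induction
   on the rank of W: if some N in S moves W out of Z, pass to the preimage. *)
Lemma stable_escape_vector Z W : mx_stable S Z -> mx_stable S W -> ~~ (W <= Z)%MS ->
  exists v : 'rV[F]_n,
    [/\ (v <= W)%MS, ~~ (v <= Z)%MS & forall N, S N -> (v *m N <= Z)%MS].
Proof.
move=> stZ; move: {2}(\rank W) (leqnn (\rank W)) => r.
elim: r W => [|r IH] W rW stW WZ.
  by move: rW WZ; rewrite leqn0 mxrank_eq0 => /eqP ->; rewrite sub0mx.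
case: (classic (exists2 N, S N & ~~ (W *m N <= Z)%MS)) => [[N SN WNZ]|all_in].
  have PW : (mx_preimage W N Z <= W)%MS := capmxSl _ _.
  have rP : (\rank (mx_preimage W N Z) <= r)%N.
    suff : (\rank (mx_preimage W N Z) < \rank W)%N by lia.
    by apply: rank_ltmx; rewrite ltmxE PW sub_mx_preimage negb_and WNZ orbT.
  have [v [vP vZ vN]] := IH _ rP (stable_preimage stZ stW SN) (preimage_escape stW SN WZ).
  by exists v; split; rewrite ?(submx_trans vP PW).
have [i Wi] := row_subPn WZ.
exists (row i W); split; rewrite ?row_sub // => N SN.
rewrite -row_mul (submx_trans (row_sub _ _)) //.
by apply/negPn/negP => WNZ; apply: all_in; exists N.
Qed.

Definition annihilated k Z := forall s, size s = k ->
  (forall A, List.In A s -> mx_alg S A) -> (Z <= kermx (foldr mulmx 1%:M s))%MS.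

Lemma annihilated_step k Z Z' : annihilated k Z ->
  (forall A, mx_alg S A -> (Z' *m A <= Z)%MS) -> annihilated k.+1 Z'.
Proof.
move=> killZ Z'Z [|A s] //= [sz] algs.
rewrite sub_kermx mulmxA -sub_kermx.
apply: submx_trans (Z'Z A (algs A (or_introl erefl))) _.
by apply: killZ => // B sB; apply: algs; right.
Qed.

(* An S-stable flag: for k <= n there is an S-stable space of rank at least k
   killed by all products of k elements of the algebra; the next step adds
   to Z a vector given by stable_escape_vector. *)
Lemma annihilated_flag k : (k <= n)%N ->
  exists Z, [/\ mx_stable S Z, (k <= \rank Z)%N & annihilated k Z].
Proof.
elim: k => [_|k IH hk].
  exists 0; split=> //; first by move=> N _; rewrite mul0mx sub0mx.
  by move=> s _ _; rewrite sub0mx.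
have [Z [stZ rZ killZ]] := IH (ltnW hk).
case: (boolP (row_full Z)) => [fullZ|notfullZ].
  exists Z; split=> //; first by move: fullZ; rewrite /row_full => /eqP ->.
  by apply: annihilated_step killZ _ => A; apply: mx_alg_stable.
have notZ1 : ~~ (1%:M <= Z)%MS by rewrite sub1mx.
have [v [_ vZ vN]] := stable_escape_vector stZ (fun N _ => submx1 _) notZ1.
have Zv_into A : mx_alg S A -> ((Z + v)%MS *m A <= Z)%MS.
  move=> algA; rewrite addsmxMr addsmx_sub (mx_alg_stable stZ algA) /=.
  exact: mx_alg_into algA _ _ vN.
exists (Z + v)%MS; split; last exact: annihilated_step killZ Zv_into.
  by move=> N SN; rewrite (submx_trans (Zv_into N (mx_alg_gen SN))) ?addsmxSl.
have : (\rank Z < \rank (Z + v)%MS)%N.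
  rewrite rank_ltmx // ltmxE addsmxSl; apply: contra vZ.
  exact: submx_trans (addsmxSr Z v).
lia.
Qed.

Theorem mx_alg_prod_eq0 s : size s = n ->
  (forall A, List.In A s -> mx_alg S A) -> foldr mulmx 1%:M s = 0.
Proof.
move=> sz algs; have [Z [_ rZ killZ]] := annihilated_flag (leqnn _).
have Z1 : (1%:M <= Z)%MS by rewrite sub1mx /row_full eqn_leq rank_leq_col.
by apply/eqP; rewrite -(mul1mx (foldr _ _ _)) -sub_kermx (submx_trans Z1) ?killZ.
Qed.

End CommutingNilpotent.
End NilpotentMatrixAlgebra.

Lemma unipotent_pchar (F : fieldType) (n p : nat) (D : 'M[F]_n) :
  p \in [pchar F] -> D ^+ p = 1 -> (D - 1) ^+ p = 0.
Proof.
case: n D => [|m] D chF Dp; first by apply/matrixP => -[].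
have chM : p \in [pchar 'M[F]_m.+1] by rewrite pchar_lalg.
have := pFrobenius_autB_comm chM (commr1 D).
by rewrite !pFrobenius_autE Dp expr1n subrr.
Qed.

Section LaurentSeries.
Set Implicit Arguments. Unset Strict Implicit.
Variable M : zmodType.

Lemma laurent_ext (x y : laurent M) :
  (forall n, coef x n = coef y n) -> x = y.
Proof.
case: x y => [x hx] [y hy] /= exy.
have exy' : x = y := functional_extensionality _ _ exy.
by subst; congr exist; apply: proof_irrelevance.
Qed.

Lemma additive_map_zero (A : laurent M -> laurent M) :
  additive_map A -> A lzero = lzero.
Proof.
move=> addA; apply: laurent_ext => n.
have /(congr1 (fun z => coef z n)) /= : A lzero = ladd (A lzero) (A lzero).
  by rewrite -addA; congr A; apply: laurent_ext => m /=; rewrite addr0.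
by move=> h; apply: (addrI (coef (A lzero) n)); rewrite addr0 -h.
Qed.

Lemma coef_ladd (x y : laurent M) (n : int) : coef (ladd x y) n = coef x n + coef y n.
Proof. by []. Qed.

Lemma mono_add (j : int) (u v : M) :
  mono j (u + v) = ladd (mono j u) (mono j v).
Proof. by apply: laurent_ext => n /=; case: (n == j); rewrite ?addr0. Qed.

Definition ltail (j : int) (x : laurent M) : laurent M :=
  lsub x (mono j (coef x j)).

Lemma ltailE (j : int) (x : laurent M) :
  x = ladd (mono j (coef x j)) (ltail j x).
Proof. by apply: laurent_ext => l /=; rewrite addrC subrK. Qed.

Lemma coef_ltail (j l : int) (x : laurent M) :
  coef (ltail j x) l = if l == j then 0 else coef x l.
Proof. by rewrite /=; case: eqP => [->|_]; rewrite ?subrr ?subr0. Qed.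

Lemma ball_ltail (j : int) (x : laurent M) :
  ball j x -> ball (j + 1) (ltail j x).
Proof.
move=> bx l hl; rewrite coef_ltail; case: eqP => // /eqP ne.
by apply: bx; move/eqP: ne; lia.
Qed.

Lemma ball_mono (j : int) (u : M) : ball j (mono j u).
Proof. by move=> l hl /=; rewrite lt_eqF. Qed.

Lemma lbd_trunc (K : int) (x : laurent M) :
  lbd (fun l => if l < K then coef x l else 0).
Proof. by case: x => f [N hN] /=; exists N => l hl; rewrite hN ?if_same. Qed.

Definition ltrunc (K : int) (x : laurent M) : laurent M :=
  exist _ _ (lbd_trunc K x).

End LaurentSeries.

Lemma additive_Fp_linear (p n : nat) (V : lmodType 'F_p) (g : 'rV['F_p]_n -> V) :
  (forall u v, g (u + v) = g u + g v) ->
  forall u, g u = \sum_(t < n) u 0 t *: g (delta_mx 0 t).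
Proof.
move=> gD.
have g0 : g 0 = 0 by apply: (addrI (g 0)); rewrite -gD !addr0.
have gMn u k : g (u *+ k) = g u *+ k.
  by elim: k => [|k IH]; rewrite ?mulr0n ?g0 // !mulrS gD IH.
move=> u; rewrite {1}(row_sum_delta u) (big_morph g gD g0).
by apply: eq_bigr => t _; rewrite -[u 0 t]natr_Zp !scaler_nat gMn.
Qed.

Section LaurentEndomorphisms.
Set Implicit Arguments. Unset Strict Implicit.
Variables (p d : nat).
Local Notation V := (laurent 'rV['F_p]_d).
Implicit Types (A B : V -> V) (x y : V).

Definition filtered A := forall j x, ball j x -> ball j (A x).

Definition blk_lower A := forall i j : int, i < j -> blk A i j = 0.

Lemma coef_map_mono A : additive_map A -> forall (j n : int) (u : 'rV_d),
  coef (A (mono j u)) n = \sum_(t < d) u 0 t *: coef (A (mono j (delta_mx 0 t))) n.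
Proof.
move=> addA j n; apply: (@additive_Fp_linear p d _ (fun u => coef (A (mono j u)) n)).
by move=> u v /=; rewrite mono_add addA.
Qed.

Lemma blk_lower_mono A : additive_map A -> blk_lower A ->
  forall (i j : int) (u : 'rV_d), i < j -> coef (A (mono j u)) i = 0.
Proof.
move=> addA lowA i j u ij; rewrite coef_map_mono //; apply: big1 => t _.
suff -> : coef (A (mono j (delta_mx 0 t))) i = 0 by rewrite scaler0.
apply/rowP => r; have := congr1 (fun M : 'M_d => M r t) (lowA i j ij).
by rewrite !mxE.
Qed.

Lemma blk_lower_filtered_poly A : additive_map A -> blk_lower A ->
  forall (m : nat) j x, ball j x -> (forall l, j + m%:Z <= l -> coef x l = 0) ->
  ball j (A x).
Proof.
move=> addA lowA; elim=> [|m IH] j x bx supx.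
  have -> : x = lzero.
    apply: laurent_ext => l /=; case: (ltP l j) => hl; first exact: bx.
    by apply: supx; rewrite addr0.
  by rewrite additive_map_zero.
have btail := IH (j + 1) _ (ball_ltail bx).
move=> n hn; rewrite (ltailE j x) addA coef_ladd.
rewrite (blk_lower_mono addA lowA) ?add0r // btail //; last by lia.
by move=> l hl; rewrite coef_ltail ifN; [apply: supx; lia | apply/eqP; lia].
Qed.

(* A continuous additive map with lower triangular blocks preserves the
   filtration: truncate x far out and use continuity. *)
Lemma blk_lower_filtered A : additive_map A -> cont A -> blk_lower A -> filtered A.
Proof.
move=> addA contA lowA j x bx n hn.
have [K hK] := contA x (n + 1).
have near : ball (n + 1) (lsub (A (ltrunc K x)) (A x)).
  by apply: hK => l hl /=; rewrite hl subrr.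
have trunc0 : coef (A (ltrunc K x)) n = 0.
  suff : ball j (A (ltrunc K x)) by apply.
  apply: (blk_lower_filtered_poly addA lowA (m := absz (K - j))) => [l hl|l hl] /=.
    by case: ifP => // _; exact: bx.
  by rewrite ifF //; apply/negbTE; rewrite -leNgt; lia.
have /(_ ltac:(lia)) := near n.
change (coef (A (ltrunc K x)) n - coef (A x) n = 0 -> coef (A x) n = 0).
by rewrite trunc0 sub0r => /eqP; rewrite oppr_eq0 => /eqP.
Qed.

Lemma blk_comp A B (i : int) : additive_map A -> filtered A -> filtered B ->
  blk (A \o B) i i = blk A i i *m blk B i i.
Proof.
move=> addA filtA filtB; apply/matrixP => r s; rewrite !mxE /=.
set w := B (mono i (delta_mx 0 s)).
have bw : ball i w by apply: filtB; apply: ball_mono.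
rewrite (ltailE i w) addA coef_ladd (filtA _ _ (ball_ltail bw) i) ?addr0; last by lia.
rewrite coef_map_mono // summxE; apply: eq_bigr => t _.
by rewrite !mxE mulrC.
Qed.

Lemma blk_id (i : int) : blk (fun x : V => x) i i = 1%:M.
Proof. by apply/matrixP => r s; rewrite !mxE /= eqxx mxE eqxx /= eq_sym. Qed.

Lemma blk_prod_maps (i : int) (s : seq (V -> V)) :
  (forall a, List.In a s -> additive_map a /\ filtered a) ->
  filtered (prod_maps s) /\
  blk (prod_maps s) i i = foldr mulmx 1%:M (map (fun a => blk a i i) s).
Proof.
elim: s => [|a s IH] hs /=; first by split; [move=> j x | exact: blk_id].
have [addA filtA] := hs a (or_introl erefl).
have [filtS blkS] := IH (fun b hb => hs b (or_intror hb)).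
split; first by move=> j x /filtS; apply: filtA.
by rewrite blk_comp // blkS.
Qed.

End LaurentEndomorphisms.

Section GeneratedAlgebra.
Set Implicit Arguments. Unset Strict Implicit.
Variables (p d : nat).
Local Notation V := (laurent 'rV['F_p]_d).
Variable G : (V -> V) -> Prop.
Hypothesis G_additive : forall b, G b -> additive_map b.
Hypothesis G_filtered : forall b, G b -> filtered b.

Lemma in_alg_additive a : in_alg G a -> additive_map a.
Proof.
elim=> {a} [a /G_additive //| |a b _ addA _ addB|c a _ addA|a b _ addA _ addB] x y.
- by apply: laurent_ext => n /=; rewrite addr0.
- by rewrite addA addB; apply: laurent_ext => n /=; rewrite addrACA.
- by rewrite addA; apply: laurent_ext => n /=; rewrite scalerDr.
- by rewrite /= addB addA.
Qed.

Lemma in_alg_filtered a : in_alg G a -> filtered a.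
Proof.
elim=> {a} [a /G_filtered //| |a b _ fA _ fB|c a _ fA|a b _ fA _ fB] j x bx n hn.
- by [].
- by rewrite coef_ladd (fA _ _ bx n hn) (fB _ _ bx n hn) addr0.
- by change (c *: coef (a x) n = 0); rewrite (fA _ _ bx n hn) scaler0.
- exact: fA (fB _ _ bx) n hn.
Qed.

Lemma in_alg_blk (i : int) (S : 'M['F_p]_d -> Prop) :
  (forall b, G b -> S (blk b i i)) ->
  forall a, in_alg G a -> mx_alg S (blk a i i).
Proof.
move=> GS a.
elim=> {a} [a /GS/mx_alg_gen //| |a b _ IHa _ IHb|c a _ IHa|a b algA IHa algB IHb].
- rewrite (_ : blk _ i i = 0); first exact: mx_alg_zero.
  by apply/matrixP => r s; rewrite !mxE.
- rewrite (_ : blk _ i i = blk a i i + blk b i i); first exact: mx_alg_add.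
  by apply/matrixP => r s; rewrite !mxE.
- rewrite (_ : blk _ i i = c *: blk a i i); first exact: mx_alg_scale.
  by apply/matrixP => r s; rewrite !mxE.
- rewrite blk_comp; [exact: mx_alg_mul | exact: in_alg_additive | exact: in_alg_filtered..].
Qed.

End GeneratedAlgebra.

Lemma In_map_inv {T U : Type} {f : T -> U} {s : seq T} {y : U} :
  List.In y (map f s) -> exists2 x, List.In x s & y = f x.
Proof.
elim: s => [|x s IH] //= [<-|/IH [x' hx' ->]]; first by exists x; [left|].
by exists x'; [right|].
Qed.

Section DiagonalBlocks.
Set Implicit Arguments. Unset Strict Implicit.
Variables (p d : nat) (phi : laurent 'F_p -> laurent 'rV['F_p]_d -> laurent 'rV['F_p]_d).
Local Notation V := (laurent 'rV['F_p]_d).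
Hypothesis p_prime : prime p.
Hypothesis phi_aut : forall f, is_aut (phi f).
Hypothesis phi_hom : forall f g, phi (ladd f g) = phi f \o phi g.
Hypothesis phi_lower : forall f, blk_lower (phi f).

Lemma phi_additive f : additive_map (phi f).
Proof. by case: (phi_aut f). Qed.

Lemma phi_filtered f : filtered (phi f).
Proof. by case: (phi_aut f) => addf _ contf _; apply: blk_lower_filtered. Qed.

(* phi 0 is idempotent and bijective, hence the identity. *)
Lemma phi_zero : phi lzero = id.
Proof.
have [_ bij0 _ _] := phi_aut lzero.
have idem : phi lzero = phi lzero \o phi lzero.
  by rewrite -phi_hom; congr phi; apply: laurent_ext => n /=; rewrite addr0.
apply: functional_extensionality => x; apply: (bij_inj bij0).
exact: (congr1 (fun g => g x) (esym idem)).
Qed.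

Lemma blk_phi_add (i : int) f g :
  blk (phi (ladd f g)) i i = blk (phi f) i i *m blk (phi g) i i.
Proof. by rewrite phi_hom (blk_comp _ (phi_additive f) (phi_filtered f) (phi_filtered g)). Qed.

(* F_p((t)) is abelian, so the diagonal blocks of the phi f commute. *)
Lemma blk_phi_comm (i : int) f g :
  blk (phi f) i i *m blk (phi g) i i = blk (phi g) i i *m blk (phi f) i i.
Proof.
rewrite -!blk_phi_add; congr (blk (phi _) i i).
by apply: laurent_ext => n /=; rewrite addrC.
Qed.

Lemma blk_phi_sub1_comm (i : int) f g :
  (blk (phi f) i i - 1) *m (blk (phi g) i i - 1) =
  (blk (phi g) i i - 1) *m (blk (phi f) i i - 1).
Proof.
have c : GRing.comm (blk (phi f) i i) (blk (phi g) i i).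
  by rewrite /GRing.comm -!mulmxE blk_phi_comm.
rewrite mulmxE; apply: commrB (commr1 _).
exact: commr_sym (commrB (commr_sym c) (commr1 _)).
Qed.

Fixpoint lmuln (f : laurent 'F_p) (k : nat) : laurent 'F_p :=
  if k is k'.+1 then ladd f (lmuln f k') else lzero.

Lemma blk_phi_muln (i : int) f k : blk (phi (lmuln f k)) i i = blk (phi f) i i ^+ k.
Proof.
elim: k => [|k IH] /=; first by rewrite phi_zero expr0; exact: blk_id.
by rewrite blk_phi_add IH exprS mulmxE.
Qed.

Lemma lmuln_pchar f : lmuln f p = lzero.
Proof.
apply: laurent_ext => n.
have coef_muln k : coef (lmuln f k) n = coef f n *+ k.
  by elim: k => [|k IH] //; rewrite mulrS -IH.
by rewrite coef_muln -mulr_natr pchar_Fp_0 // mulr0.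
Qed.

(* Since p f = 0, the diagonal blocks of phi f - Id are nilpotent. *)
Lemma blk_phi_sub1_nil (i : int) f : (blk (phi f) i i - 1) ^+ p = 0.
Proof.
apply: (unipotent_pchar (pchar_Fp p_prime)).
by rewrite -blk_phi_muln lmuln_pchar phi_zero; exact: blk_id.
Qed.

Definition phi_sub1 f : V -> V := fun x => lsub (phi f x) x.

Lemma phi_sub1_additive f : additive_map (phi_sub1 f).
Proof.
move=> x y; rewrite /phi_sub1 phi_additive.
by apply: laurent_ext => n /=; rewrite opprD addrACA.
Qed.

Lemma phi_sub1_filtered f : filtered (phi_sub1 f).
Proof.
move=> j x bx n hn; change (coef (phi f x) n - coef x n = 0).
by rewrite (phi_filtered f bx hn) bx // subr0.
Qed.

Lemma blk_phi_sub1 (i : int) f : blk (phi_sub1 f) i i = blk (phi f) i i - 1%:M.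
Proof. by apply/matrixP => r s; rewrite !mxE /= eqxx !mxE eqxx /= eq_sym. Qed.

End DiagonalBlocks.

Theorem mainTheorem15 (p d : nat) (hp : prime p)
  (phi : laurent 'F_p -> laurent 'rV['F_p]_d -> laurent 'rV['F_p]_d)
  (phi_aut : forall f, is_aut (phi f))
  (phi_hom : forall f g, phi (ladd f g) = phi f \o phi g)
  (phi_cont : brac_continuous phi)
  (phi_conj : forall f, phi (tmul f) = tmul \o phi f \o tinv)
  (phi_tri : forall f (i j : int), i < j -> blk (phi f) i j = 0) :
  forall s : seq (laurent 'rV['F_p]_d -> laurent 'rV['F_p]_d),
    size s = d ->
    (forall a, List.In a s ->
       in_alg (fun b => exists r : int, b = (fun x => lsub (phi (tpow p r) x) x)) a) ->
    forall i : int, blk (prod_maps s) i i = 0.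
Proof.
move=> s sz algs i.
pose G b := exists r : int, b = phi_sub1 phi (tpow p r).
have G_additive b : G b -> additive_map b.
  by rewrite /G => -[r ->]; apply: phi_sub1_additive.
have G_filtered b : G b -> filtered b.
  by rewrite /G => -[r ->]; apply: phi_sub1_filtered.
have algs_ok a : List.In a s -> additive_map a /\ filtered a.
  by move/algs => alga; split; [apply: in_alg_additive alga | apply: in_alg_filtered alga].
have [_ ->] := blk_prod_maps i algs_ok.
pose S M := exists r : int, M = blk (phi (tpow p r)) i i - 1%:M.
apply: (@mx_alg_prod_eq0 _ _ S).
- by move=> _ _ [r ->] [r' ->]; apply: blk_phi_sub1_comm.
- by move=> _ [r ->]; exists p; apply: blk_phi_sub1_nil.
- by rewrite size_map.
- move=> _ /In_map_inv [a /algs alga ->]; apply: (in_alg_blk G_additive G_filtered _ alga).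
  by move=> _ [r ->]; exists r; rewrite blk_phi_sub1.
Qed.
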